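(* Let $P_1,\ldots,P_n$ be closed disks with centers $c_i$ and radii $\rho_i\ge0$, let $D_{ij}$ be the closed disk with center $c_i-c_j$ and radius $\rho_i+\rho_j$, $\mathcal{D}=\bigcup_{i,j}D_{ij}$, and let $A_{ij}$ be the Apollonius cell of $D_{ij}$ in the Apollonius diagram of $\{D_{ij}\}_{i,j=1}^n$. If an Apollonius edge $pq$ of $A_{ij}$ (with endpoints $p,q$) meets the circle $\partial D_{ij}$ at a point $x\ne p,q$, then there are points $x'$ on the edge $pq$ arbitrarily close to $x$ that are not contained in $\mathcal{D}$.
   Context: For a family of disks $D_k$ with centers $c_k$ and radii $\rho_k$, $\delta_k(x)=\|x-c_k\|-\rho_k$; the Apollonius cell of $D_k$ is $\{x\mid\delta_k(x)\le\delta_l(x)\text{ for all }l\}$; the one-dimensional connected sets of points belonging to exactly two cells are Apollonius edges. *)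

From HB Require Import structures.
From mathcomp Require Import all_boot all_order all_algebra.
From mathcomp Require Import all_classical all_reals all_analysis.
Set Implicit Arguments. Unset Strict Implicit. Unset Printing Implicit Defensive.
Import Order.TTheory GRing.Theory Num.Theory.
Import numFieldNormedType.Exports.
Local Open Scope classical_set_scope.
Local Open Scope ring_scope.

Section Apollonius.
Variable R : realType.
Notation pt := (R * R)%type.

Definition eucl_dist (x y : pt) : R :=
  Num.sqrt ((x.1 - y.1) ^+ 2 + (x.2 - y.2) ^+ 2).

Definition psub (x y : pt) : pt := (x.1 - y.1, x.2 - y.2).

Definition disk := (pt * R)%type.

Definition cdisk (D : disk) : set pt := [set x | eucl_dist x D.1 <= D.2].
Definition circle (D : disk) : set pt := [set x | eucl_dist x D.1 = D.2].

Definition delta (D : disk) (x : pt) : R := eucl_dist x D.1 - D.2.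

Definition apo_cell (F : set disk) (D : disk) : set pt :=
  [set x | forall E, F E -> delta D x <= delta E x].

Definition two_cell_points (F : set disk) : set pt :=
  [set x | exists D1 D2, [/\ F D1 /\ F D2, D1 <> D2, apo_cell F D1 x,
             apo_cell F D2 x &
             forall D, F D -> apo_cell F D x -> D = D1 \/ D = D2]].

(* The closed edge "pq" is gamma([0,1]). *)
Definition apo_edge (F : set disk) (D : disk) (gamma : R -> pt) (p q : pt) :=
  [/\ {within `[0%R, 1%R], continuous gamma},
      set_inj `[0%R, 1%R] gamma,
      gamma 0 = p /\ gamma 1 = q,
      gamma @` `]0%R, 1%R[ `<=` apo_cell F D &
      exists x0, two_cell_points F x0 /\
        connected_component (two_cell_points F) x0 = gamma @` `]0%R, 1%R[ ].

Definition Dij (n : nat) (c : 'I_n -> pt) (rho : 'I_n -> R) (i j : 'I_n) : disk :=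
  (psub (c i) (c j), rho i + rho j).

Definition Dfam (n : nat) (c : 'I_n -> pt) (rho : 'I_n -> R) : set disk :=
  [set D | exists i j, D = Dij c rho i j].

Definition Dunion (n : nat) (c : 'I_n -> pt) (rho : 'I_n -> R) : set pt :=
  [set x | exists i j, cdisk (Dij c rho i j) x].

End Apollonius.

(* Write x = gamma t0; x lies in the cell of D and in exactly one other cell,
   that of E, and delta_D x = delta_E x = 0, so x is on both circles.  If
   every edge point near x were covered by some disk of the family, then near
   t0 the edge would run along the bisector {delta_D = delta_E} inside D.  By
   Heron's formula, a point there is determined by its distance to the center
   of D and the side of the line of centers it lies on; if x itself is on
   that line, the two circles are tangent at x and the whole inner bisector
   lies on it.  So the distance from gamma s to the center of D would be
   continuous and injective in s near t0, hence strictly monotone, although it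
   reaches its maximum, the radius of D, at the interior point t0. *)

From HB Require Import structures.
From mathcomp Require Import all_boot all_order all_algebra.
From mathcomp Require Import all_classical all_reals all_analysis.
From mathcomp Require Import ring lra.
Set Implicit Arguments.
Unset Strict Implicit.
Unset Printing Implicit Defensive.
Import Order.TTheory GRing.Theory Num.Theory.
Import numFieldNormedType.Exports.
Local Open Scope classical_set_scope.
Local Open Scope ring_scope.

Section PlaneGeometry.
Variable R : realType.
Notation pt := (R * R)%type.
Implicit Types (a b x y z : pt) (t : R) (D E : disk R).

Definition orient a b y : R :=
  (b.1 - a.1) * (y.2 - a.2) - (b.2 - a.2) * (y.1 - a.1).

Lemma eucl_dist_ge0 x y : 0 <= eucl_dist x y.
Proof. exact: sqrtr_ge0. Qed.

Lemma sqr_eucl_dist x y :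
  eucl_dist x y ^+ 2 = (x.1 - y.1) ^+ 2 + (x.2 - y.2) ^+ 2.
Proof. by rewrite sqr_sqrtr // addr_ge0 // sqr_ge0. Qed.

Lemma eucl_dist_eq0 x y : (eucl_dist x y == 0) = (x == y).
Proof.
case: x y => [x1 x2] [y1 y2].
rewrite sqrtr_eq0 le_eqVlt ltNge addr_ge0 ?sqr_ge0 // orbF.
by rewrite paddr_eq0 ?sqr_ge0 // !sqrf_eq0 !subr_eq0 xpair_eqE.
Qed.

Lemma orient_heron a b y :
  4 * orient a b y ^+ 2 =
  ((eucl_dist y a + eucl_dist y b) ^+ 2 - eucl_dist b a ^+ 2) *
  (eucl_dist b a ^+ 2 - (eucl_dist y a - eucl_dist y b) ^+ 2).
Proof.
have -> : forall u v w : R, ((u + v) ^+ 2 - w ^+ 2) * (w ^+ 2 - (u - v) ^+ 2) =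
    2 * w ^+ 2 * (u ^+ 2 + v ^+ 2) - (w ^+ 2) ^+ 2 - (u ^+ 2 - v ^+ 2) ^+ 2.
  by move=> u v w; ring.
by rewrite !sqr_eucl_dist /orient; ring.
Qed.

Lemma dot_cross_inj (u1 u2 p1 p2 q1 q2 : R) : u1 ^+ 2 + u2 ^+ 2 != 0 ->
  u1 * p1 + u2 * p2 = u1 * q1 + u2 * q2 ->
  u1 * p2 - u2 * p1 = u1 * q2 - u2 * q1 -> p1 = q1 /\ p2 = q2.
Proof.
move=> u0 hdot hcross.
have e1 : (u1 ^+ 2 + u2 ^+ 2) * (p1 - q1) =
    u1 * (u1 * p1 + u2 * p2 - (u1 * q1 + u2 * q2))
    - u2 * (u1 * p2 - u2 * p1 - (u1 * q2 - u2 * q1)) by ring.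
have e2 : (u1 ^+ 2 + u2 ^+ 2) * (p2 - q2) =
    u2 * (u1 * p1 + u2 * p2 - (u1 * q1 + u2 * q2))
    + u1 * (u1 * p2 - u2 * p1 - (u1 * q2 - u2 * q1)) by ring.
rewrite hdot hcross !subrr !mulr0 subrr in e1.
rewrite hdot hcross !subrr !mulr0 addr0 in e2.
move/eqP: e1; move/eqP: e2.
by rewrite !mulf_eq0 (negbTE u0) !subr_eq0 => /eqP-> /eqP->.
Qed.

Lemma eq_pt_dist_orient a b y z : a <> b ->
  eucl_dist y a = eucl_dist z a -> eucl_dist y b = eucl_dist z b ->
  orient a b y = orient a b z -> y = z.
Proof.
move=> /eqP; rewrite eq_sym -eucl_dist_eq0 -sqrf_eq0 sqr_eucl_dist => ab.
move=> /(congr1 (fun d => d ^+ 2)) ha /(congr1 (fun d => d ^+ 2)) hb ho.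
rewrite !sqr_eucl_dist in ha hb.
have [] := dot_cross_inj (p1 := y.1 - a.1) (q1 := z.1 - a.1) ab _ ho.
  by lra.
by case: y z {ha hb ho} => [y1 y2] [z1 z2] /= h1 h2; congr pair; lra.
Qed.

Lemma orient_eq0_shrink a b x y t :
  orient a b x = 0 -> 0 <= t -> t <= eucl_dist x a -> t <= eucl_dist x b ->
  eucl_dist y a = eucl_dist x a - t -> eucl_dist y b = eucl_dist x b - t ->
  orient a b y = 0.
Proof.
move=> ox t0 tr ts ya yb.
have := orient_heron a b x; have := orient_heron a b y.
have r0 := eucl_dist_ge0 x a; have s0 := eucl_dist_ge0 x b.
rewrite ox ya yb; move: (eucl_dist x a) (eucl_dist x b) (eucl_dist b a) r0 s0 tr ts.
move=> r s w r0 s0 tr ts hy /esym/eqP.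
(* The circles are tangent at x, externally (w = r + s) or internally
   (w = |r - s|); shrinking both radii by t separates externally tangent
   circles and keeps internally tangent ones tangent. *)
rewrite expr0n mulr0 mulf_eq0 => /orP[]/eqP hx; apply/eqP; rewrite -sqrf_eq0.
  rewrite eq_le sqr_ge0 andbT.
  have hA : (r - t + (s - t)) ^+ 2 - w ^+ 2 <= 0 by nra.
  have hB : 0 <= w ^+ 2 - (r - t - (s - t)) ^+ 2 by nra.
  have := mulr_le0_ge0 hA hB; lra.
by rewrite (_ : r - t - (s - t) = r - s) ?hx ?mulr0 in hy; [lra | ring].
Qed.

Lemma eucl_dist_continuous (c : pt) : continuous (fun y => eucl_dist y c).
Proof.
move=> y; apply: continuous_comp; last exact: sqrt_continuous.
by apply: cvgD; apply: cvgM; apply: cvgB;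
  (exact: cvg_fst || exact: cvg_snd || exact: cvg_cst).
Qed.

Lemma orient_continuous a b : continuous (orient a b).
Proof.
move=> y; apply: cvgB; apply: cvgM; (try apply: cvgB);
  (exact: cvg_fst || exact: cvg_snd || exact: cvg_cst).
Qed.

Lemma delta_continuous D : continuous (delta D).
Proof. by move=> y; apply: cvgB; [exact: eucl_dist_continuous | exact: cvg_cst]. Qed.

Lemma near_eucl_dist_lt x e : 0 < e -> \forall y \near x, eucl_dist y x < e.
Proof.
move=> e0; have cv : eucl_dist y x @[y --> x] --> eucl_dist x x :=
  @eucl_dist_continuous x x.
apply: (cvgr_lt _ cv).
by have /eqP -> : eucl_dist x x == 0 by rewrite eucl_dist_eq0.
Qed.

Lemma near_orient_same_side a b x :
  \forall y \near x, orient a b x = 0 \/ 0 < orient a b y * orient a b x.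
Proof.
have [ox | ox] := eqVneq (orient a b x) 0; first by near=> y; left.
have cv : orient a b y * orient a b x @[y --> x] --> orient a b x * orient a b x.
  by apply: cvgM; [exact: orient_continuous | exact: cvg_cst].
near=> y; right; near: y; apply: (cvgr_gt _ cv).
by rewrite -expr2 lt_def sqr_ge0 sqrf_eq0 ox.
Unshelve. all: by end_near.
Qed.

Definition inner_bisector D E : set pt :=
  [set y | delta D y = delta E y /\ delta D y <= 0].

Lemma inner_bisector_inj D E x y z :
  D.1 <> E.1 -> circle D x -> circle E x ->
  inner_bisector D E y -> inner_bisector D E z ->
  orient D.1 E.1 x = 0 \/ 0 < orient D.1 E.1 y * orient D.1 E.1 z ->
  eucl_dist y D.1 = eucl_dist z D.1 -> y = z.
Proof.
rewrite /inner_bisector /circle /delta /=.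
move=> ab xa xb [yDE yD] [zDE zD] side yza.
have yzb : eucl_dist y E.1 = eucl_dist z E.1 by lra.
apply: (eq_pt_dist_orient ab yza yzb).
case: side => [ox | pos].
  set t := D.2 - eucl_dist y D.1.
  have t0 : 0 <= t by rewrite /t; lra.
  have yt := eucl_dist_ge0 y D.1; have ybt := eucl_dist_ge0 y E.1.
  by rewrite !(orient_eq0_shrink ox t0 (t := t)) // ?xa ?xb /t; lra.
have := orient_heron D.1 E.1 y; rewrite yza yzb -orient_heron => /eqP.
rewrite (can_eq (mulKf _)) ?pnatr_eq0 // eqf_sqr => /orP[/eqP // | /eqP oyz].
by move: pos; rewrite oyz mulNr oppr_gt0 ltNge sqr_ge0.
Qed.

Lemma no_inj_path_in_inner_bisector D E (gamma : R -> pt) u v t :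
  D.1 <> E.1 -> u < t < v -> circle D (gamma t) -> circle E (gamma t) ->
  {within `[u, v], continuous gamma} -> {in `[u, v] &, injective gamma} ->
  (forall s, s \in `[u, v] -> inner_bisector D E (gamma s) /\
    (orient D.1 E.1 (gamma t) = 0 \/
     0 < orient D.1 E.1 (gamma s) * orient D.1 E.1 (gamma t))) ->
  False.
Proof.
move=> ab /andP[ut tv] xD xE gc ginj inner.
pose phi s := eucl_dist (gamma s) D.1.
have phiC : {within `[u, v], continuous phi}.
  by move=> s; exact: (continuous_comp (gc s) (@eucl_dist_continuous D.1 _)).
have phiI : {in `[u, v] &, injective phi}.
  move=> s s' hs hs' eq_phi; apply: ginj => //.
  have [[ins sides] [ins' sides']] := (inner s hs, inner s' hs').
  apply: (inner_bisector_inj ab xD xE ins ins' _ eq_phi).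
  case: sides sides' => [-> | pos]; [by left | case=> [-> | pos']; first by left].
  right; have := mulr_gt0 pos pos'.
  by have := sqr_ge0 (orient D.1 E.1 (gamma t)); nra.
have phi_le s : s \in `[u, v] -> phi s <= D.2.
  by case/inner=> -[_]; rewrite /delta /phi; lra.
have [uI vI tI] : [/\ u \in `[u, v], v \in `[u, v] & t \in `[u, v]].
  by rewrite !in_itv /= !lexx (ltW ut) (ltW tv) (ltW (lt_trans ut tv)).
have phit : phi t = D.2 := xD.
case: (itv_continuous_inj_mono phiC phiI) => mono.
  by have := mono t v tI vI tv; have := phi_le v vI; lra.
by have := mono t u tI uI ut; have := phi_le u uI; lra.
Qed.

End PlaneGeometry.

Section ApolloniusDiagram.
Variable R : realType.
Notation pt := (R * R)%type.
Implicit Types (F : set (disk R)) (D E G : disk R) (x y : pt).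

Lemma near_apo_cell (I : finType) (g : I -> disk R) F x : F `<=` range g ->
  \forall y \near x, forall D, F D -> apo_cell F D y -> apo_cell F D x.
Proof.
move=> Fg.
suff: \forall y \near x, forall k, apo_cell F (g k) y -> apo_cell F (g k) x.
  by apply: filter_app; near=> y => cells D /Fg[k _ <-]; exact: cells.
apply: (@filter_forall _ _
  (fun k y => apo_cell F (g k) y -> apo_cell F (g k) x) (nbhs x) _).
move=> k; have [xk | nxk] := pselect (apo_cell F (g k) x).
  by near=> y.
have [H FH Hk] : exists2 H, F H & delta H x < delta (g k) x.
  apply: contra_notP nxk => noH E FE; rewrite leNgt; apply/negP => lt.
  by apply: noH; exists E.
have cv : delta (g k) y - delta H y @[y --> x] --> delta (g k) x - delta H x.
  by apply: cvgB; exact: delta_continuous.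
near=> y => /(_ H FH) le; suff : 0 < delta (g k) y - delta H y by lra.
by near: y; apply: (cvgr_gt _ cv); rewrite subr_gt0.
Unshelve. all: by end_near.
Qed.

Lemma two_cell_points_other F D x : F D -> apo_cell F D x ->
  two_cell_points F x -> exists E, [/\ F E, E <> D, apo_cell F E x &
    forall G, F G -> apo_cell F G x -> G = D \/ G = E].
Proof.
move=> FD xD [D1 [D2 [[F1 F2] D12 x1 x2 cells]]].
have [-> | ->] := cells D FD xD; first by exists D2; split => // /esym.
by exists D1; split => // G FG /(cells G FG)[] ->; [right | left].
Qed.

Lemma two_cell_points_cells F D E y : two_cell_points F y ->
  (forall G, F G -> apo_cell F G y -> G = D \/ G = E) ->
  apo_cell F D y /\ apo_cell F E y.
Proof.
move=> [D1 [D2 [[F1 F2] D12 y1 y2 _]]] cells.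
by have [] := cells D1 F1 y1; have [] := cells D2 F2 y2; do 2 move=> ?; subst.
Qed.

Lemma apo_cells_delta_eq F D E y : F D -> F E ->
  apo_cell F D y -> apo_cell F E y -> delta D y = delta E y.
Proof. by move=> FD FE yD yE; apply/eqP; rewrite eq_le (yD E FE) (yE D FD). Qed.

Lemma apo_cells_circle F D E x : F D -> F E -> E <> D ->
  apo_cell F D x -> apo_cell F E x -> circle D x -> circle E x /\ D.1 <> E.1.
Proof.
move=> FD FE ED xD xE; have := apo_cells_delta_eq FD FE xD xE.
rewrite /circle /delta /= => dDE xa; have xb : eucl_dist x E.1 = E.2 by lra.
split=> // ab; apply: ED; apply: injective_projections => //=.
by rewrite -xa -xb ab.
Qed.

Lemma inner_bisector_of_cells F D E G y : F D -> F E -> F G ->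
  apo_cell F D y -> apo_cell F E y -> cdisk G y -> inner_bisector D E y.
Proof.
move=> FD FE FG yD yE yG; split; first exact: apo_cells_delta_eq yD yE.
by have := yD G FG; move: yG; rewrite /cdisk /delta /=; lra.
Qed.

Lemma Dfam_sub_range n (c : 'I_n -> pt) (rho : 'I_n -> R) :
  Dfam c rho `<=` range (fun kl : 'I_n * 'I_n => Dij c rho kl.1 kl.2).
Proof. by move=> _ [k [l ->]]; exists (k, l). Qed.

Section ApolloniusEdges.
Variables (F : set (disk R)) (D : disk R) (gamma : R -> pt) (p q : pt).
Hypothesis edge : apo_edge F D gamma p q.

Lemma apo_edge_interior s : s \in `]0, 1[ ->
  two_cell_points F (gamma s) /\ apo_cell F D (gamma s).
Proof.
have [_ _ _ sub [x0 [_ cc]]] := edge.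
move=> sI; have gs : (gamma @` `]0, 1[) (gamma s) by exists s.
by split; [rewrite -cc in gs; exact: connected_component_sub gs | exact: sub].
Qed.

Lemma apo_edge_param_interior t : t \in `[0, 1] ->
  gamma t <> p -> gamma t <> q -> t \in `]0, 1[.
Proof.
have [_ _ [<- <-] _ _] := edge.
rewrite !in_itv /= !lt_neqAle => /andP[-> ->] tp tq; rewrite !andbT.
apply/andP; split; apply/eqP => h.
  by apply: tp; rewrite -h.
by apply: tq; rewrite h.
Qed.

End ApolloniusEdges.

Lemma apo_edge_not_in_union (I : finType) (g : I -> disk R) F D
    (gamma : R -> pt) p q x e :
  F `<=` range g -> F D -> apo_edge F D gamma p q ->
  (gamma @` `[0, 1]) x -> circle D x -> x <> p -> x <> q -> 0 < e ->
  exists x', [/\ (gamma @` `[0, 1]) x', eucl_dist x' x < e &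
                 forall G, F G -> ~ cdisk G x'].
Proof.
move=> Fg FD edge [t0 t0I <-] xD xp xq e0.
have {t0I xp xq} t0I := apo_edge_param_interior edge t0I xp xq.
have [gc ginj _ _ _] := edge.
have [xtc xDcell] := apo_edge_interior edge t0I.
have [E [FE ED xEcell cellsx]] := two_cell_points_other FD xDcell xtc.
have [xE ab] := apo_cells_circle FD FE ED xDcell xEcell xD.
apply: contrapT => none.
have [gI _ _] := (continuous_within_itvP _ ltr01).1 gc.
have near_x : \forall y \near gamma t0, [/\ eucl_dist y (gamma t0) < e,
    forall G, F G -> apo_cell F G y -> apo_cell F G (gamma t0) &
    orient D.1 E.1 (gamma t0) = 0 \/
    0 < orient D.1 E.1 y * orient D.1 E.1 (gamma t0)].
  near=> y; split; near: y;
    [exact: near_eucl_dist_lt | exact: near_apo_cell Fg |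
     exact: near_orient_same_side].
have [d [d0 seg]] := filter_ex (filterI (nbhs_right_gt 0)
  ((at_right_in_segment t0 _).2 (filterI (near_in_itvoo t0I) (gI t0 t0I _ near_x)))).
have segI : `[t0 - d, t0 + d] `<=` `[0, 1].
  by move=> s /seg[sI _]; exact: subset_itv_oo_cc.
apply: (no_inj_path_in_inner_bisector (u := t0 - d) (v := t0 + d) ab _ xD xE).
- by apply/andP; split; lra.
- exact: continuous_subspaceW segI gc.
- by move=> s s' /segI sI /segI s'I; exact: ginj (mem_set sI) (mem_set s'I).
move=> s /seg[sI [se cells side]]; split => //.
have [stc sDcell] := apo_edge_interior edge sI.
have [_ sEcell] :=
  two_cell_points_cells stc (fun G FG sG => cellsx G FG (cells G FG sG)).
have [G FG sG] : exists2 G, F G & cdisk G (gamma s).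
  apply: contrapT => out; apply: none; exists (gamma s); split => //.
    by exists s => //; exact: subset_itv_oo_cc.
  by move=> G FG sG; apply: out; exists G.
exact: inner_bisector_of_cells FD FE FG sDcell sEcell sG.
Unshelve. all: by end_near.
Qed.

End ApolloniusDiagram.

Theorem proposition13 (R : realType) (n : nat) (c : 'I_n -> (R * R)%type)
  (rho : 'I_n -> R) (hrho : forall i, 0 <= rho i) (i j : 'I_n)
  (gamma : R -> (R * R)%type) (p q x : (R * R)%type) :
  apo_edge (Dfam c rho) (Dij c rho i j) gamma p q ->
  (gamma @` `[0%R, 1%R]) x ->
  circle (Dij c rho i j) x ->
  x <> p -> x <> q ->
  forall e : R, 0 < e ->
    exists x', [/\ (gamma @` `[0%R, 1%R]) x', eucl_dist x' x < e &
                   ~ Dunion c rho x'].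
Proof.
move=> edge xg xD xp xq e e0.
have FD : Dfam c rho (Dij c rho i j) by exists i, j.
have [x' [x'g x'e out]] := apo_edge_not_in_union
  (Dfam_sub_range (c := c) (rho := rho)) FD edge xg xD xp xq e0.
by exists x'; split => // -[k [l kl]]; apply: out kl; exists k, l.
Qed.
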